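(* Let $\varepsilon>0$, let $T\in\mathbb{R}$, and let $\{f_i\}_{i\in\mathbb{N}}$ be real-valued queries on datasets such that each $f_i$ is 1-sensitive (i.e. $|f_i(D)-f_i(D')|\le 1$ for all neighboring $D,D'$) and the family has unidirectional sensitivity: for all neighboring datasets $D,D'$, if $f_i(D)>f_i(D')$ for some $i$, then there is no $j$ with $f_j(D)<f_j(D')$. Consider UDSAboveThreshold: on input $D$, sample $\hat T\gets T+\mathrm{Lap}(2/\varepsilon)$; then for $i=1,2,\dots$, sample a fresh $\nu_i\sim\mathrm{Lap}(2/\varepsilon)$; if $f_i(D)+\nu_i\ge\hat T$, output $a_i=\top$ and halt; otherwise output $a_i=\bot$ and continue. Then UDSAboveThreshold (whose output is the stream $a_1,a_2,\dots$) is $\varepsilon$-differentially private.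
   Context: $\mathrm{Lap}(b)$ is the Laplace distribution with mean $0$ and scale $b$, density $\frac{1}{2b}e^{-|x|/b}$; all Laplace samples are independent. Two datasets are neighboring if they differ by replacing the contribution of one individual. A randomized algorithm $M$ is $\varepsilon$-differentially private if for every pair of neighboring datasets $D,D'$ and every set of outcomes $S$, $\Pr[M(D)\in S]\le e^{\varepsilon}\Pr[M(D')\in S]$. *)

From HB Require Import structures.
From mathcomp Require Import all_boot all_order all_algebra.
From mathcomp Require Import all_classical all_reals all_analysis.
Set Implicit Arguments. Unset Strict Implicit. Unset Printing Implicit Defensive.
Import Order.TTheory GRing.Theory Num.Theory.
Local Open Scope classical_set_scope.
Local Open Scope ring_scope.

(* Two datasets are neighboring if they have the same size and differ in at
   most one position (the contribution of one individual is replaced). *)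
Definition neighboring (X : Type) (D D' : seq X) : Prop :=
  size D = size D' /\
  exists i : nat, forall j : nat, j <> i -> onth D j = onth D' j.

Definition laplace_pdf (R : realType) (b : R) (x : R) : R :=
  (2 * b)^-1 * expR (- (`|x| / b)).

Definition laplace_rv d (Om : measurableType d) (R : realType)
  (P : probability Om R) (b : R) (X : Om -> R) : Prop :=
  measurable_fun setT X /\
  forall B : set R, measurable B ->
    P (X @^-1` B) = (\int[lebesgue_measure]_(x in B) (laplace_pdf b x)%:E)%E.

Definition mutually_independent d (Om : measurableType d) (R : realType)
  (P : probability Om R) (I : eqType) (X : I -> Om -> R) : Prop :=
  forall (J : seq I) (B : I -> set R), uniq J ->
    (forall i, i \in J -> measurable (B i)) ->
    P (\big[setI/setT]_(i <- J) (X i @^-1` B i)) =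
    (\prod_(i <- J) P (X i @^-1` B i))%E.

Definition one_sensitive (X : Type) (R : realType) (g : seq X -> R) : Prop :=
  forall D D', neighboring D D' -> `|g D - g D'| <= 1.

Definition unidirectional (X : Type) (R : realType) (f : nat -> seq X -> R) : Prop :=
  forall D D', neighboring D D' ->
    (exists i, f i D' < f i D) -> ~ (exists j, f j D < f j D').

(* The randomness: Z (threshold noise, so that
   That = T + Z with Z ~ Lap(2/eps)) and nu i (noise of the i-th query,
   i = 0,1,2,... corresponding to the paper's i = 1,2,3,...). *)
Definition uds_test (X : Type) (Om : Type) (R : realType)
  (f : nat -> seq X -> R) (T : R) (Z : Om -> R) (nu : nat -> Om -> R)
  (D : seq X) (w : Om) (i : nat) : bool :=
  T + Z w <= f i D + nu i w.

(* Output stream: a_k = Some true (top, then halt), Some false (bot),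
   None (no output: the algorithm halted at an earlier step). *)
Definition uds_above_threshold (X : Type) (Om : Type) (R : realType)
  (f : nat -> seq X -> R) (T : R) (Z : Om -> R) (nu : nat -> Om -> R)
  (D : seq X) (w : Om) : nat -> option bool :=
  fun k => if [exists i : 'I_k, uds_test f T Z nu D w i] then None
           else Some (uds_test f T Z nu D w k).

From HB Require Import structures.
From mathcomp Require Import all_boot all_order all_algebra.
From mathcomp Require Import all_classical all_reals all_analysis.
From mathcomp Require Import measurable_realfun ring lra zify.
Import Order.TTheory GRing.Theory Num.Theory.
Local Open Scope classical_set_scope.
Local Open Scope ring_scope.

(* Write the i-th test as nu_i >= Z + a_i, with offsets a_i = T - f_i(D).  Unidirectional
   sensitivity and 1-sensitivity give a single s in [0, 1] such that
   a_i(D) <= a_i(D') + s <= a_i(D) + 1 for every i.  The event "halt at step k" for D is carried into the same event for D' by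
   translating Z by s, the noises nu_i (i < k) by an arbitrarily small amount, and nu_k by at
   most 1 more; with Laplace(2/eps) densities this costs a factor exp((s + 1) eps / 2) <= exp eps.
   Independence is only available as a product rule on rectangles, so the translation is done
   cell by cell after cutting the range of Z into intervals of width dl, and dl then tends to 0.
   "Never halt" is the decreasing limit of "no halt during the first n steps", and summing over
   the countably many outputs gives the bound for every S. *)

Section lebesgue_measure_translation.
Context {R : realType}.
Local Notation mu := (@lebesgue_measure R).

Lemma lebesgue_measure_shift (s : R) (A : set R) : measurable A ->
  pushforward mu (shift s : _ -> measurableTypeR R) A = mu A.
Proof.
move=> mA; apply/esym/lebesgue_measure_unique => //; first exact: measurable_funD.
move=> mshift X /ocitvP[->|[[a b] /= ab ->]].
  by rewrite !measure0.
rewrite /pushforward (_ : _ @^-1` _ = `]a - s, b - s]%classic); last first.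
  by apply/seteqP; split => x /=; rewrite !in_itv/= ltrBlDr lerBrDr.
by rewrite !lebesgue_measure_itv/= !lte_fin ltrD2r ab -!EFinD opprB addrA subrK.
Qed.

Lemma ge0_integral_shift (t : R) (B : set R) (f : R -> \bar R) :
  measurable B -> measurable_fun B f -> (forall x, B x -> (0 <= f x)%E) ->
  (\int[mu]_(x in B) f x = \int[mu]_(x in shift t @^-1` B) f (x + t)%R)%E.
Proof.
move=> mB mf f0.
rewrite (eq_measure_integral (pushforward mu (shift t : _ -> measurableTypeR R))).
- exact: measurable_funD.
- move=> mshift; rewrite ge0_integral_pushforward//.
  by move=> x /set_mem/f0.
- by move=> mshift A mA _; exact/esym/lebesgue_measure_shift.
Qed.

End lebesgue_measure_translation.

Section laplace.
Context {R : realType}.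
Local Notation mu := (@lebesgue_measure R).
Implicit Types b t x : R.

Lemma laplace_pdf_ge0 b x : 0 <= b -> 0 <= laplace_pdf b x.
Proof. by move=> b0; rewrite mulr_ge0 ?expR_ge0// invr_ge0 mulr_ge0. Qed.

Lemma measurable_laplace_pdf b : measurable_fun [set: R] (laplace_pdf b).
Proof.
apply: measurable_funM => //; apply: measurableT_comp; first exact: measurable_expR.
by apply: measurableT_comp => //; apply: measurable_funM.
Qed.

Lemma laplace_pdf_shift_le b t x : 0 < b ->
  laplace_pdf b (x + t) <= expR (`|t| / b) * laplace_pdf b x.
Proof.
move=> b0; rewrite /laplace_pdf mulrCA ler_pM2l ?invr_gt0 ?mulr_gt0//.
rewrite -expRD ler_expR -!mulNr -mulrDl ler_pM2r ?invr_gt0//.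
by have := ler_normB (x + t) t; rewrite addrK; lra.
Qed.

Lemma laplace_rv_shift_le d (T : measurableType d) (P : probability T R)
    b (X : T -> R) t (B B' : set R) :
  0 < b -> laplace_rv P b X -> measurable B -> measurable B' ->
  (forall x, B (x + t) -> B' x) ->
  (P (X @^-1` B) <= (expR (`|t| / b))%:E * P (X @^-1` B'))%E.
Proof.
move=> b0 [_ lawX] mB mB' BB'.
have mshift : measurable_fun [set: R] (shift t : R -> R) by exact: measurable_funD.
have mpdf D : measurable_fun D (fun x => (laplace_pdf b x)%:E).
  by apply/measurable_EFinP/measurable_funTS; exact: measurable_laplace_pdf.
have pdf_ge0 x : (0 <= (laplace_pdf b x)%:E)%E.
  by rewrite lee_fin laplace_pdf_ge0 ?ltW.
have mBt : measurable (shift t @^-1` B) by rewrite -[X in measurable X]setTI; exact: mshift.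
rewrite !lawX// (ge0_integral_shift t B _ mB (mpdf B) (fun x _ => pdf_ge0 x)).
apply: (@le_trans _ _ (\int[mu]_(x in shift t @^-1` B)
    ((expR (`|t| / b))%:E * (laplace_pdf b x)%:E))%E).
  apply: ge0_le_integral => //.
  - apply/measurable_EFinP/measurable_funTS.
    exact: measurableT_comp (measurable_laplace_pdf b) mshift.
  - by apply: measurable_funeM; exact: mpdf.
  - by move=> x _; rewrite -EFinM lee_fin laplace_pdf_shift_le.
rewrite ge0_integralZl//; last exact: mpdf.
rewrite lee_wpmul2l ?lee_fin ?expR_ge0//.
apply: ge0_subset_integral => //; exact: mpdf.
Qed.
End laplace.

Lemma lee_prod (R : realType) (I : eqType) (s : seq I) (x y : I -> \bar R) :
  (forall i, i \in s -> (0 <= x i)%E) -> (forall i, i \in s -> (x i <= y i)%E) ->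
  (\prod_(i <- s) x i <= \prod_(i <- s) y i)%E.
Proof.
move=> x0 xy; rewrite big_seq [leRHS]big_seq.
suff /andP[] : (0 <= \prod_(i <- s | i \in s) x i <= \prod_(i <- s | i \in s) y i)%E by [].
elim/big_ind2 : _ => [|a1 a2 b1 b2 /andP[a0 a12] /andP[b0 b12]|i si].
- by rewrite lee01 lexx.
- by rewrite mule_ge0 ?lee_pmul.
- by rewrite x0 ?xy.
Qed.

Section cylinder.
Context {T : Type} {R : realType} {I : eqType} (X : I -> T -> R).

Definition cylinder (J : seq I) (B : I -> set R) : set T :=
  \big[setI/setT]_(i <- J) (X i @^-1` B i).

Lemma cylinderP J B w : cylinder J B w <-> (forall i, i \in J -> B i (X i w)).
Proof.
rewrite /cylinder; elim: J => [|i J IHJ]; first by rewrite big_nil.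
rewrite big_cons; split => [[Bi /IHJ BJ] j|BJ].
  by rewrite inE => /predU1P[->//|]; exact: BJ.
split; first by apply: BJ; rewrite mem_head.
by apply/IHJ => j jJ; apply: BJ; rewrite inE jJ orbT.
Qed.
End cylinder.

Section measurable_cylinder.
Context {d} {T : measurableType d} {R : realType} {I : eqType} (X : I -> T -> R).

Lemma measurable_cylinder J B : (forall i, measurable_fun setT (X i)) ->
  (forall i, measurable (B i)) -> measurable (cylinder X J B).
Proof.
move=> mX mB; rewrite /cylinder; elim: J => [|i J IHJ]; first by rewrite big_nil.
by rewrite big_cons; apply: measurableI => //; rewrite -[X in measurable X]setTI; exact: mX.
Qed.

Lemma independent_cylinder_le (P : probability T R) J B B' (c : I -> R) :
  mutually_independent P X -> uniq J ->
  (forall i, measurable (B i)) -> (forall i, measurable (B' i)) ->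
  (forall i, i \in J -> P (X i @^-1` B i) <= (c i)%:E * P (X i @^-1` B' i))%E ->
  (P (cylinder X J B) <= (\prod_(i <- J) c i)%:E * P (cylinder X J B'))%E.
Proof.
move=> indX uJ mB mB' BB'.
rewrite /cylinder !indX// -prodEFin -big_split/=.
by apply: lee_prod => // i _; exact: measure_ge0.
Qed.
End measurable_cylinder.

Lemma ler_mul_expR_gt0 (R : realType) (x y : R) :
  (forall e, 0 < e -> x <= expR e * y) -> x <= y.
Proof.
move=> xy; have [y_le0|y_gt0] := leP y 0.
  by apply: le_trans (xy 1 ltr01) _; rewrite ler_neMl// ltW// pexpR_gt1.
apply/ler_addgt0Pr => r r_gt0.
have yr_gt1 : 1 < (y + r) / y by rewrite ltr_pdivlMr// mul1r ltrDl.
apply: le_trans (xy _ (ln_gt0 yr_gt1)) _.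
by rewrite lnK ?divfK ?gt_eqF// posrE (lt_trans _ yr_gt1).
Qed.

Lemma lee_mul_expR_gt0 (R : realType) (x y : \bar R) :
  (forall e : R, 0 < e -> (x <= (expR e)%:E * y)%E) -> (x <= y)%E.
Proof.
case: y => [y| |] xy; last 2 first.
- exact: leey.
- by have := xy 1 ltr01; rewrite gt0_muleNy ?lte_fin ?expR_gt0.
case: x xy => [x| |] xy; last by rewrite leNye.
  by rewrite lee_fin; apply: ler_mul_expR_gt0 => e /xy; rewrite -EFinM lee_fin.
by have := xy 1 ltr01; rewrite -EFinM leye_eq.
Qed.

(* Enumerates int as 0, -1, 1, -2, ..., so that grid cells can be indexed by nat, as
   countable additivity requires. *)
Definition int_of_nat (m : nat) : int := if odd m then Negz m./2 else Posz m./2.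

Definition nat_of_int (z : int) : nat :=
  match z with Posz k => k.*2 | Negz k => k.*2.+1 end.

Lemma int_of_natK : cancel int_of_nat nat_of_int.
Proof.
move=> m; rewrite /int_of_nat; have := odd_double_half m.
by case: (odd m) => /= halfE; rewrite -[RHS]halfE.
Qed.

Lemma nat_of_intK : cancel nat_of_int int_of_nat.
Proof. by case=> k; rewrite /int_of_nat /= odd_double ?doubleK ?uphalf_double. Qed.

Section grid.
Context {R : realType} (dl : R).
Hypothesis dl_gt0 : 0 < dl.

Definition grid_point (m : nat) : R := (int_of_nat m)%:~R * dl.

Lemma grid_pointE m x :
  (grid_point m <= x < grid_point m + dl) = (Num.floor (x / dl) == int_of_nat m).
Proof.
by rewrite floor_eq ler_pdivlMr// ltr_pdivrMr// intrD mulrDl mul1r.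
Qed.

Lemma grid_point_cover x : exists m, grid_point m <= x < grid_point m + dl.
Proof. by exists (nat_of_int (Num.floor (x / dl))); rewrite grid_pointE nat_of_intK. Qed.

Lemma grid_point_inj x m m' : grid_point m <= x < grid_point m + dl ->
  grid_point m' <= x < grid_point m' + dl -> m = m'.
Proof.
rewrite !grid_pointE => /eqP floor_m /eqP; rewrite floor_m.
by move/(congr1 nat_of_int); rewrite !int_of_natK.
Qed.
End grid.

Lemma probability_bigcap_le d (T : measurableType d) (R : realType)
    (P : probability T R) (A B : (set T)^nat) (c : R) :
  (forall n, measurable (A n)) -> (forall n, measurable (B n)) ->
  nonincreasing_seq A -> nonincreasing_seq B ->
  (forall n, P (A n) <= c%:E * P (B n))%E ->
  (P (\bigcap_n A n) <= c%:E * P (\bigcap_n B n))%E.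
Proof.
move=> mA mB ndA ndB leAB.
have finP (C : (set T)^nat) : measurable (C 0%N) -> (P (C 0%N) < +oo)%E.
  by move=> mC; exact: le_lt_trans (probability_le1 P mC) (ltry 1).
have cvA := nonincreasing_cvg_mu (finP A (mA 0%N)) mA (bigcapT_measurable mA) ndA.
have cvB := nonincreasing_cvg_mu (finP B (mB 0%N)) mB (bigcapT_measurable mB) ndB.
apply: (lee_cvg_to cvA (cvgeZl _ cvB)) => //.
exact: nearW.
Qed.

Section threshold_events.
Context {d} {Om : measurableType d} {R : realType} (P : probability Om R).
Variables (b : R) (Z : Om -> R) (nu : nat -> Om -> R).
Hypothesis b_gt0 : 0 < b.
Hypothesis lapZ : laplace_rv P b Z.
Hypothesis lapnu : forall i, laplace_rv P b (nu i).

Definition noise (o : option nat) : Om -> R := if o is Some i then nu i else Z.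

Hypothesis indep_noise : mutually_independent P noise.

Let laplace_noise o : laplace_rv P b (noise o). Proof. by case: o. Qed.

Let measurable_noise o : measurable_fun setT (noise o).
Proof. by case: (laplace_noise o). Qed.

Definition threshold_event (a : nat -> R) (n : nat) (top : bool) : set Om :=
  [set w | (forall i, (i < n)%N -> nu i w < Z w + a i) /\ (top -> Z w + a n <= nu n w)].

Lemma measurable_threshold_event a n top : measurable (threshold_event a n top).
Proof.
have mle i : measurable [set w | Z w + a i <= nu i w].
  rewrite -[X in measurable X]setTI; apply: measurable_fun_le => //.
    by apply: measurable_funD => //; exact: (measurable_noise None).
  exact: (measurable_noise (Some i)).
rewrite (_ : threshold_event _ _ _ = \bigcap_(i in `I_n) ~` [set w | Z w + a i <= nu i w]
    `&` if top then [set w | Z w + a n <= nu n w] else setT).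
  apply: measurableI; first by apply: bigcap_measurableType => i _; exact: measurableC.
  by case: top.
apply/seteqP; split=> w /= [lt_n top_n]; split.
- by move=> i /lt_n; rewrite /= ltNge => /negP.
- by case: top top_n => // /(_ erefl).
- by move=> i /lt_n; rewrite /= ltNge => /negP.
- by case: top top_n.
Qed.

Definition box_index (n : nat) (top : bool) : seq (option nat) :=
  None :: map Some (iota 0 (n + top)).

Definition box_bounds (l h : R) (u : nat -> R) (v : R) (n : nat) (o : option nat) : set R :=
  if o is Some i then (if (i < n)%N then `]-oo, u i[ else `[v, +oo[)%classic
  else `[l, h[%classic.

Definition threshold_box l h u v n top : set Om :=
  cylinder noise (box_index n top) (box_bounds l h u v n).

Lemma mem_box_index n top i : (Some i \in box_index n top) = (i < n + top)%N.
Proof. by rewrite inE (mem_map (@Some_inj _)) mem_iota. Qed.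

Lemma threshold_boxP l h u v n top w : threshold_box l h u v n top w <->
  [/\ l <= Z w < h, forall i, (i < n)%N -> nu i w < u i & top -> v <= nu n w].
Proof.
rewrite /threshold_box cylinderP; split=> [Bw|[Zw nuw top_nu] [i|] //=].
- have Bsome i : (i < n + top)%N -> box_bounds l h u v n (Some i) (nu i w).
    by move=> lt_i; apply: (Bw (Some i)); rewrite mem_box_index.
  split.
  + by have := Bw None (mem_head _ _); rewrite /= in_itv.
  + by move=> i lt_in; have := Bsome i (ltn_addr _ lt_in); rewrite /box_bounds lt_in /= in_itv.
  + move=> top1; have := Bsome n; rewrite /box_bounds top1 addn1 ltnSn ltnn /= in_itv/= andbT.
    exact.
- rewrite mem_box_index /box_bounds => lt_i; case: ltnP => [/nuw|le_ni] /=.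
    by rewrite in_itv.
  have [top1 ->] : top /\ i = n by case: top lt_i {top_nu} => /= ?; split => //; lia.
  by rewrite in_itv/= andbT top_nu.
Qed.

Lemma uniq_box_index n top : uniq (box_index n top).
Proof.
rewrite /= (map_inj_uniq (@Some_inj _)) iota_uniq andbT.
by apply/mapP => -[].
Qed.

Lemma measurable_box_bounds l h u v n o : measurable (box_bounds l h u v n o).
Proof. by case: o => [i|]; rewrite /box_bounds; [case: ifP => _|]; exact: measurable_itv. Qed.

(* Translations of Z (index None), of nu_i for i < n and of nu_n that carry the box of a grid
   cell for offsets a into the box for a'; as dl -> 0 only s and t remain. *)
Definition box_shift (s t dl : R) (n : nat) (o : option nat) : R :=
  if o is Some i then (if (i < n)%N then dl else - (t + dl)) else - s.

Lemma box_shift_sum (s t dl : R) (n : nat) (top : bool) : 0 <= s -> 0 <= t -> 0 <= dl ->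
  \sum_(o <- box_index n top) `|box_shift s t dl n o| <= s + t + n.+1%:R * dl.
Proof.
move=> s0 t0 dl0; have dln_ge0 : 0 <= dl *+ n by rewrite mulrn_wge0.
have sum_dl : \sum_(0 <= i < n) `|box_shift s t dl n (Some i)| = dl *+ n.
  rewrite (eq_big_nat _ _ (F2 := fun=> dl)) ?sumr_const_nat ?subn0// => i /andP[_ lt_in].
  by rewrite /= lt_in ger0_norm.
rewrite big_cons big_map normrN ger0_norm// -addrA lerD2l -mulr_natl mulrSr.
have -> : iota 0 (n + top) = index_iota 0 (n + top) by rewrite /index_iota subn0.
case: top; rewrite ?addn1 ?addn0 ?big_nat_recr//= sum_dl; last by lra.
by rewrite ltnn normrN ger0_norm; lra.
Qed.

Lemma threshold_box_le (a a' : nat -> R) (s t dl l : R) (n : nat) (top : bool) :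
  0 <= s -> 0 <= t -> 0 < dl ->
  (forall i, (i < n)%N -> a i <= a' i + s) -> (top -> a' n + s <= a n + t) ->
  (P (threshold_box l (l + dl)%R (fun i => l + dl + a i)%R (l + a n)%R n top) <=
   (expR ((s + t + n.+1%:R * dl) / b)%R)%:E *
   P (threshold_box (l + s)%R (l + s + dl)%R (fun i => l + s + a' i)%R (l + s + dl + a' n)%R
        n top))%E.
Proof.
move=> s0 t0 dl0 le_a le_an.
pose B' := box_bounds (l + s) (l + s + dl) (fun i => l + s + a' i) (l + s + dl + a' n) n.
pose c o := expR (`|box_shift s t dl n o| / b).
apply: (@le_trans _ _ ((\prod_(o <- box_index n top) c o)%:E *
                        P (cylinder noise (box_index n top) B'))%E).
  apply: independent_cylinder_le => //.
  - exact: uniq_box_index.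
  - by move=> o; exact: measurable_box_bounds.
  - by move=> o; exact: measurable_box_bounds.
  move=> o o_in; apply: laplace_rv_shift_le => //; try exact: measurable_box_bounds.
  rewrite /B' /box_bounds; case: o o_in => [i|] /=; last first.
    by move=> _ x; rewrite !in_itv/= => /andP[? ?]; apply/andP; split; lra.
  rewrite mem_box_index; case: (ltnP i n) => [lt_in|le_ni] lt_i x /=; rewrite !in_itv/=.
    by have := le_a i lt_in; lra.
  have top1 : top by case: top lt_i {le_an} => //=; lia.
  by rewrite !andbT; have := le_an top1; lra.
rewrite lee_wpmul2r ?measure_ge0// lee_fin -expR_sum ler_expR -mulr_suml ler_pM2r ?invr_gt0//.
by apply: box_shift_sum; rewrite // ltW.
Qed.

Lemma measurable_threshold_box l h u v n top : measurable (threshold_box l h u v n top).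
Proof.
apply: measurable_cylinder => o; first exact: measurable_noise.
exact: measurable_box_bounds.
Qed.

Lemma threshold_event_grid_le (a a' : nat -> R) (s t dl : R) (n : nat) (top : bool) :
  0 <= s -> 0 <= t -> 0 < dl ->
  (forall i, (i < n)%N -> a i <= a' i + s) -> (top -> a' n + s <= a n + t) ->
  (P (threshold_event a n top) <=
   (expR ((s + t + n.+1%:R * dl) / b))%:E * P (threshold_event a' n top))%E.
Proof.
move=> s0 t0 dl0 le_a le_an.
pose upper m := let l := grid_point dl m in
  threshold_box l (l + dl) (fun i => l + dl + a i) (l + a n) n top.
pose lower m := let l := grid_point dl m in
  threshold_box (l + s) (l + s + dl) (fun i => l + s + a' i) (l + s + dl + a' n) n top.
have cover_upper : (P (threshold_event a n top) <= \sum_(0 <= m <oo) P (upper m))%E.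
  apply: measure_sigma_subadditive => //.
  - by move=> m; exact: measurable_threshold_box.
  - exact: measurable_threshold_event.
  move=> w [lt_a le_top]; have [m /andP[gZ Zg]] := grid_point_cover _ dl0 (Z w).
  exists m => //; apply/threshold_boxP; split.
  - by rewrite gZ Zg.
  - by move=> i /lt_a; lra.
  - by move/le_top; lra.
have lower_disj : trivIset setT lower.
  apply/trivIsetP => m m' _ _ mm'; apply/seteqP; split => // w [].
  move=> /threshold_boxP[/andP[? ?] _ _] /threshold_boxP[/andP[? ?] _ _].
  by move: mm'; rewrite (@grid_point_inj _ dl dl0 (Z w - s) m m') ?eqxx//; apply/andP; split; lra.
have lower_sub : \bigcup_m lower m `<=` threshold_event a' n top.
  move=> w [m _ /threshold_boxP[/andP[? ?] lt_u le_v]]; split.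
  - by move=> i /lt_u; lra.
  - by move/le_v; lra.
apply: (le_trans cover_upper).
apply: (@le_trans _ _ (\sum_(0 <= m <oo)
    (expR ((s + t + n.+1%:R * dl) / b))%:E * P (lower m))%E).
  apply: lee_nneseries => [m _ _|m _]; first exact: measure_ge0.
  exact: threshold_box_le.
rewrite nneseriesZl// lee_wpmul2l ?lee_fin ?expR_ge0//.
have mlower m : measurable (lower m) by exact: measurable_threshold_box.
have mlowerU : measurable (\bigcup_m lower m) by exact: bigcup_measurable.
rewrite -measure_semi_bigcup//; apply: le_measure lower_sub; rewrite inE//.
exact: measurable_threshold_event.
Qed.

Lemma threshold_event_le (a a' : nat -> R) (s t : R) (n : nat) (top : bool) :
  0 <= s -> 0 <= t ->
  (forall i, (i < n)%N -> a i <= a' i + s) -> (top -> a' n + s <= a n + t) ->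
  (P (threshold_event a n top) <=
   (expR ((s + t) / b))%:E * P (threshold_event a' n top))%E.
Proof.
move=> s0 t0 le_a le_an; apply: lee_mul_expR_gt0 => e e_gt0.
have dl_gt0 : 0 < e * b / n.+1%:R by rewrite !divr_gt0 ?mulr_gt0.
apply: le_trans (threshold_event_grid_le a a' s t _ n top s0 t0 dl_gt0 le_a le_an) _.
rewrite muleA -EFinM -expRD lee_wpmul2r ?measure_ge0// lee_fin ler_expR.
rewrite [leRHS](_ : _ = (s + t + n.+1%:R * (e * b / n.+1%:R)) / b)//.
by field; rewrite gt_eqF//= -natr1 pnatr_eq0.
Qed.

(* Index 0 is "never halts", index k.+1 is "halts at step k". *)
Definition above_threshold_event (a : nat -> R) (m : nat) : set Om :=
  if m is k.+1 then threshold_event a k true else \bigcap_n threshold_event a n false.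

Lemma measurable_above_threshold_event a m : measurable (above_threshold_event a m).
Proof.
case: m => [|k]; last exact: measurable_threshold_event.
by apply: bigcapT_measurable => n; exact: measurable_threshold_event.
Qed.

Lemma above_threshold_event_le (a a' : nat -> R) (s t : R) (m : nat) :
  0 <= s -> 0 <= t -> (forall i, a i <= a' i + s) -> (forall i, a' i + s <= a i + t) ->
  (P (above_threshold_event a m) <=
   (expR ((s + t) / b))%:E * P (above_threshold_event a' m))%E.
Proof.
move=> s0 t0 le_a le_a'.
have le_n n top : (P (threshold_event a n top) <=
    (expR ((s + t) / b))%:E * P (threshold_event a' n top))%E.
  by apply: threshold_event_le => // i _; exact: le_a.
case: m => [|k] //=; apply: probability_bigcap_le => // [n|n|n m le_nm|n m le_nm].
- exact: measurable_threshold_event.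
- exact: measurable_threshold_event.
- by apply/subsetPset => w [lt_m _]; split=> // i lt_in; apply: lt_m (leq_trans lt_in le_nm).
- by apply/subsetPset => w [lt_m _]; split=> // i lt_in; apply: lt_m (leq_trans lt_in le_nm).
Qed.

End threshold_events.

Arguments measurable_above_threshold_event {d Om R P b Z nu}.
Arguments above_threshold_event_le {d Om R P b Z nu}.

Lemma unidirectional_cases {X : Type} {R : realType} {f : nat -> seq X -> R} {D D' : seq X} :
  unidirectional f -> neighboring D D' ->
  (forall i, f i D' <= f i D) \/ (forall i, f i D <= f i D').
Proof.
move=> udf DD'; have [up|no_up] := pselect (exists i, f i D' < f i D); [left|right] => i.
  by rewrite leNgt; apply/negP => down; apply: udf DD' up _; exists i.
by rewrite leNgt; apply/negP => up; apply: no_up; exists i.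
Qed.

Definition halt_stream (k : nat) : nat -> option bool :=
  fun j => if (j < k)%N then Some false else if j == k then Some true else None.

Definition silent_stream : nat -> option bool := fun=> Some false.

Definition uds_outcome (m : nat) : nat -> option bool :=
  if m is k.+1 then halt_stream k else silent_stream.

Lemma uds_outcome_inj : injective uds_outcome.
Proof.
have halt_kk k : halt_stream k k = Some true by rewrite /halt_stream ltnn eqxx.
have halt_true k j : halt_stream k j = Some true -> j = k.
  by rewrite /halt_stream; case: ltngtP.
case=> [|k] [|k'] //= eq_s.
- by have := congr1 (fun s => s k') eq_s; rewrite /= halt_kk.
- by have := congr1 (fun s => s k) eq_s; rewrite /= halt_kk.
- by have := congr1 (fun s => s k) eq_s; rewrite /= halt_kk => /esym/halt_true ->.
Qed.

Section uds_above_threshold.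
Context {d} {Om : measurableType d} {R : realType} {X : Type}.
Variables (f : nat -> seq X -> R) (T : R) (Z : Om -> R) (nu : nat -> Om -> R).

Definition uds_offset (D : seq X) (i : nat) : R := T - f i D.

Lemma uds_offset_shift {D D' : seq X} : (forall i, one_sensitive (f i)) -> unidirectional f ->
  neighboring D D' ->
  exists2 s, 0 <= s <= 1 & forall i, uds_offset D i <= uds_offset D' i + s <= uds_offset D i + 1.
Proof.
move=> sens udf DD'; have fDD' i : `|f i D - f i D'| <= 1 by exact: sens.
rewrite /uds_offset; case: (unidirectional_cases udf DD') => le_f; [exists 0|exists 1];
  rewrite ?lexx ?ler01// => i; have := fDD' i; have := le_f i; rewrite ler_norml; lra.
Qed.

Lemma uds_testE D w i : uds_test f T Z nu D w i = (Z w + uds_offset D i <= nu i w).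
Proof. by rewrite /uds_test /uds_offset; apply/idP/idP; lra. Qed.

Lemma uds_above_threshold_event {D : seq X} {m : nat} {w : Om} :
  above_threshold_event Z nu (uds_offset D) m w ->
  uds_above_threshold f T Z nu D w = uds_outcome m.
Proof.
have test_false i : nu i w < Z w + uds_offset D i -> uds_test f T Z nu D w i = false.
  by rewrite uds_testE leNgt => ->.
rewrite /uds_above_threshold; case: m => [|k] /= Ew; apply/funext => j.
  have {}Ew i : uds_test f T Z nu D w i = false.
    by apply: test_false; have [+ _] := Ew i.+1 I; apply.
  by rewrite Ew; case: existsP => // -[i]; rewrite Ew.
have [lt_k /(_ isT) test_k] := Ew; rewrite -uds_testE in test_k.
rewrite /halt_stream; case: ltngtP => [lt_jk|lt_kj|->].
- by case: existsP => [[i]|_]; rewrite test_false// ?lt_k// (ltn_trans _ lt_jk).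
- by case: existsP => // -[]; exists (Ordinal lt_kj).
- by case: existsP => [[i]|_]; rewrite ?test_k// test_false// lt_k.
Qed.

Lemma uds_above_threshold_cover D w :
  exists m, above_threshold_event Z nu (uds_offset D) m w.
Proof.
case: (pselect (exists i, uds_test f T Z nu D w i)) => [/ex_minnP[k test_k min_k]|no_test].
- exists k.+1; split => [i lt_ik|_]; last by rewrite -uds_testE.
  by rewrite ltNge -uds_testE; apply/negP => /min_k; rewrite leqNgt lt_ik.
- exists 0%N => n _; split => // i _; rewrite ltNge -uds_testE.
  by apply/negP => test_i; apply: no_test; exists i.
Qed.

Lemma uds_above_threshold_preimage D (S : set (nat -> option bool)) :
  uds_above_threshold f T Z nu D @^-1` S =
  \bigcup_(m in [set m | S (uds_outcome m)]) above_threshold_event Z nu (uds_offset D) m.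
Proof.
apply/seteqP; split => w /=; last by case=> m Sm /uds_above_threshold_event ->.
by have [m Em] := uds_above_threshold_cover D w; rewrite (uds_above_threshold_event Em); exists m.
Qed.

Lemma trivIset_above_threshold_event D (Q : set nat) :
  trivIset Q (above_threshold_event Z nu (uds_offset D)).
Proof.
apply/trivIsetP => m m' _ _ /negP neq_mm'; apply/seteqP; split => // w [Em Em'].
apply/neq_mm'/eqP/uds_outcome_inj.
by rewrite -(uds_above_threshold_event Em) (uds_above_threshold_event Em').
Qed.

End uds_above_threshold.

Theorem theorem4p1 (R : realType) (d : measure_display) (Om : measurableType d)
  (P : probability Om R) (X : Type) (eps T : R) (f : nat -> seq X -> R)
  (Z : Om -> R) (nu : nat -> Om -> R) :
  0 < eps ->
  (forall i, one_sensitive (f i)) ->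
  unidirectional f ->
  laplace_rv P (2 / eps) Z ->
  (forall i, laplace_rv P (2 / eps) (nu i)) ->
  mutually_independent P (fun o : option nat =>
                            match o with None => Z | Some i => nu i end) ->
  forall (D D' : seq X), neighboring D D' ->
  forall S : set (nat -> option bool),
    (P (uds_above_threshold f T Z nu D @^-1` S)
     <= (expR eps)%:E * P (uds_above_threshold f T Z nu D' @^-1` S))%E.
Proof.
move=> eps_gt0 sens udf lapZ lapnu indep D D' DD' S.
have b_gt0 : 0 < 2 / eps by rewrite divr_gt0.
have [s /andP[s_ge0 s_le1] shift_a] := uds_offset_shift f T sens udf DD'.
have mE E m := measurable_above_threshold_event lapZ lapnu (uds_offset f T E) m.
rewrite !uds_above_threshold_preimage !measure_bigcup//; try exact: trivIset_above_threshold_event.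
rewrite -nneseriesZl; last by move=> m _; exact: measure_ge0.
apply: lee_nneseries => [m _ _|m _]; first exact: measure_ge0.
apply: le_trans (above_threshold_event_le b_gt0 lapZ lapnu indep
  (uds_offset f T D) (uds_offset f T D') s 1 m s_ge0 ler01 _ _) _;
  try by move=> i; have /andP[] := shift_a i.
rewrite lee_wpmul2r ?measure_ge0// lee_fin ler_expR invf_div mulrA ler_pdivrMr//.
by nra.
Qed.
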